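(* Let $A$ be a unital semi-simple commutative Banach algebra, $U$ an automorphism of $A$, and $w \in A$. Let $T = wU$ and let $\check{T}$ be the associated weighted composition operator on $\check{A}$. Then $\sigma_r(\check{T}) := \sigma(\check{T}) \setminus \sigma_{a.p.}(\check{T}) \subset \sigma(T)$, where $\sigma_{a.p.}(\check{T})$ is the approximate point spectrum of $\check{T}$.
   Context: $A$ is a unital commutative semi-simple Banach algebra with maximal ideal space $\mathfrak{M}_A$ and Shilov boundary $\partial A$. For $f\in A$, $\check f$ is the restriction of the Gelfand transform $\hat f$ to $\partial A$; $\check A$ is the closure of $\{\check f: f\in A\}$ in $C(\partial A)$ with sup norm. The automorphism $U$ induces a homeomorphism $\varphi$ of $\mathfrak{M}_A$ by $\widehat{Uf}(m)=\hat f(\varphi(m))$, with $\varphi(\partial A)=\partial A$. $T=wU$ means $Tf=w\cdot Uf$; $\check T$ is the operator on $\check A$ given by $(\check Tg)(t)=\check w(t)g(\varphi(t))$, $t\in\partial A$. *)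

From mathcomp Require Import all_boot all_order all_algebra.
From mathcomp Require Import all_classical all_reals all_analysis.
From mathcomp Require Import complex.
Set Implicit Arguments. Unset Strict Implicit. Unset Printing Implicit Defensive.
Import Order.TTheory GRing.Theory Num.Theory.
Import numFieldNormedType.Exports.
Local Open Scope ring_scope.
Local Open Scope classical_set_scope.

Record cbanach_alg (R : realType) (A : completeNormedModType R[i]) := CBanachAlg {
  bmul : A -> A -> A;
  bone : A;
  bmulA : forall x y z, bmul x (bmul y z) = bmul (bmul x y) z;
  bmulC : forall x y, bmul x y = bmul y x;
  bmulDl : forall x y z, bmul (x + y) z = bmul x z + bmul y z;
  bmulZl : forall (a : R[i]) x y, bmul (a *: x) y = a *: bmul x y;
  bmul1 : forall x, bmul bone x = x;
  bone_neq0 : bone != 0;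
  bnorm_mul : forall x y, `|bmul x y| <= `|x| * `|y|
}.

Declare Scope banach_scope.
Section Defs.
Variables (R : realType) (A : completeNormedModType R[i]) (B : cbanach_alg A).
Local Notation C := R[i].
Local Notation "x * y" := (bmul B x y) : banach_scope.
Local Notation "1" := (bone B) : banach_scope.
Delimit Scope banach_scope with B.

Definition is_ideal (I : set A) :=
  [/\ I 0, (forall x y, I x -> I y -> I (x + y)) &
      (forall a x, I x -> I (a * x)%B)].
Definition is_max_ideal (I : set A) :=
  [/\ is_ideal I, ~ I 1%B &
      forall J : set A, is_ideal J -> ~ J 1%B -> I `<=` J -> J = I].
Definition semisimple := forall x : A, (forall I, is_max_ideal I -> I x) -> x = 0.

Definition is_automorphism (U : A -> A) :=
  [/\ bijective U, (forall x y, U (x + y) = U x + U y),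
      (forall (a : C) x, U (a *: x) = a *: U x),
      (forall x y, U (x * y)%B = (U x * U y)%B) & U 1%B = 1%B].

Definition wcomp (w : A) (U : A -> A) : A -> A := fun x => (w * U x)%B.

Definition spectrum (T : A -> A) : set C := fun l =>
  ~ exists S : A -> A,
    [/\ (forall x y, S (x + y) = S x + S y),
        (forall (a : C) x, S (a *: x) = a *: S x),
        (exists c : C, forall x, `|S x| <= c * `|x|),
        (forall x, S (l *: x - T x) = x) &
        (forall x, l *: S x - T (S x) = x)].

(* maximal ideal space M_A, realised as the set of characters
   (nonzero multiplicative linear functionals) *)
Definition is_char (m : A -> C) :=
  [/\ (forall x y, m (x + y) = m x + m y),
      (forall (a : C) x, m (a *: x) = a * m x),
      (forall x y, m (x * y)%B = m x * m y) & m 1%B = 1].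

(* closed subsets of M_A for the Gelfand (weak-star) topology *)
Definition gelfand_closed (F : set (A -> C)) :=
  F `<=` is_char /\
  forall m, is_char m -> ~ F m ->
    exists (fs : seq A) (e : R), 0 < e /\
      forall m', is_char m' -> (forall f, f \in fs -> `|m' f - m f| < (e%:C)%C) -> ~ F m'.

Definition is_boundary (F : set (A -> C)) :=
  F `<=` is_char /\
  forall f : A, exists2 m, F m & forall m', is_char m' -> `|m' f| <= `|m f|.

(* Shilov boundary: the smallest closed boundary (intersection of all
   closed boundaries) *)
Definition shilov : set (A -> C) := fun m =>
  is_char m /\ forall F, gelfand_closed F -> is_boundary F -> F m.

(* check A: closure in C(dA) (sup norm) of the restrictions of Gelfand
   transforms.  Elements are represented by functions on M_A; only their
   values on the Shilov boundary matter. *)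
Definition checkA : set ((A -> C) -> C) := fun g =>
  forall e : R, 0 < e -> exists f : A, forall t, shilov t -> `|g t - t f| <= (e%:C)%C.

Definition eqdA (g h : (A -> C) -> C) := forall t, shilov t -> g t = h t.

Definition supnorm_eq1 (g : (A -> C) -> C) :=
  (forall t, shilov t -> `|g t| <= 1) /\
  (forall e : R, 0 < e -> exists2 t, shilov t & 1 - (e%:C)%C < `|g t|).

Definition checkT (w : A) (U : A -> A) (g : (A -> C) -> C) : (A -> C) -> C :=
  fun t => t w * g (t \o U).

Definition spectrum_check (T : ((A -> C) -> C) -> ((A -> C) -> C)) : set C :=
  fun l => ~ exists S : ((A -> C) -> C) -> ((A -> C) -> C),
    [/\ (forall g, checkA g -> checkA (S g)),
        (forall (a : C) g h, checkA g -> checkA h ->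
            eqdA (S (fun t => a * g t + h t)) (fun t => a * S g t + S h t)),
        (exists c : C, forall g (M : C), checkA g ->
            (forall t, shilov t -> `|g t| <= M) ->
            forall t, shilov t -> `|S g t| <= c * M),
        (forall g, checkA g -> eqdA (S (fun t => l * g t - T g t)) g) &
        (forall g, checkA g -> eqdA (fun t => l * S g t - T (S g) t) g)].

Definition ap_spectrum_check (T : ((A -> C) -> C) -> ((A -> C) -> C)) : set C :=
  fun l => exists g : nat -> ((A -> C) -> C),
    (forall n, checkA (g n) /\ supnorm_eq1 (g n)) /\
    forall e : R, 0 < e -> exists N, forall n, (N <= n)%N ->
      forall t, shilov t -> `|l * g n t - T (g n) t| <= (e%:C)%C.

End Defs.

From mathcomp Require Import all_boot all_order all_algebra.
From mathcomp Require Import all_classical all_reals all_analysis.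
From mathcomp Require Import complex.
From mathcomp Require Import ring lra.
Import Order.TTheory GRing.Theory Num.Theory.
Import numFieldNormedType.Exports.
Local Open Scope ring_scope.
Local Open Scope classical_set_scope.
Local Open Scope complex_scope.
Set Implicit Arguments. Unset Strict Implicit. Unset Printing Implicit Defensive.

(* Points of the Shilov boundary ∂A are characters and ∂A is invariant under m ↦ m ∘ U,
   so (λ - Ť) x̌ = (λx - w·Ux)ˇ for x ∈ A. If λ ∉ σ(T), the range of λ - Ť thus contains
   every x̌, and these are dense in Ǎ. If moreover λ ∉ σ_ap(Ť), then λ - Ť is bounded below
   on them, sup_∂A |x̂| ≤ c · sup_∂A |(λx - w·Ux)^|: otherwise normalised counterexamples
   would be approximate eigenvectors (the suprema are finite since characters are
   contractive, by the Neumann series). Hence (λx - w·Ux)ˇ ↦ x̌ is c-Lipschitz for the sup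
   norm on ∂A and extends, pointwise by completeness of ℂ, to a bounded linear two-sided
   inverse of λ - Ť on Ǎ. *)

Section RealNorm.
Variable R : realType.

Lemma ge0_complexE (z : R[i]) : 0 <= z -> z = (complex.Re z)%:C.
Proof. by case: z => a b; rewrite lecE /= => /andP[/eqP -> _]. Qed.

Lemma gt0_complexE (z : R[i]) : 0 < z -> exists2 r : R, 0 < r & z = r%:C.
Proof. by move=> z_gt0; exists (complex.Re z); rewrite -?ltcR -ge0_complexE // ltW. Qed.

Section NormedZmod.
Variable V : normedZmodType R[i].
Implicit Types x y : V.

(* The norm of a complex normed space is a nonnegative real element of R[i]; [rnorm] reads it
   in R, where the order is total. *)
Definition rnorm x : R := complex.Re `|x|.

Lemma rnormE x : `|x| = (rnorm x)%:C.
Proof. exact/ge0_complexE/normr_ge0. Qed.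

Lemma rnorm_ge0 x : 0 <= rnorm x.
Proof. by rewrite -lecR -rnormE; exact: normr_ge0. Qed.

Lemma ler_rnormD x y : rnorm (x + y) <= rnorm x + rnorm y.
Proof. by rewrite -lecR rmorphD /= -!rnormE ler_normD. Qed.

Lemma rnormN x : rnorm (- x) = rnorm x.
Proof. by rewrite /rnorm normrN. Qed.

Lemma rdistC x y : rnorm (x - y) = rnorm (y - x).
Proof. by rewrite /rnorm distrC. Qed.

Lemma rnorm0 : rnorm 0 = 0.
Proof. by rewrite /rnorm normr0. Qed.

Lemma rnorm_eq0 x : (rnorm x == 0) = (x == 0).
Proof. by rewrite -(inj_eq (@complexI R)) -rnormE normr_eq0. Qed.

Lemma lec_rnorm x r : (`|x| <= r%:C) = (rnorm x <= r).
Proof. by rewrite rnormE lecR. Qed.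

End NormedZmod.

Lemma rnormZ (V : normedModType R[i]) a (x : V) : rnorm (a *: x) = rnorm a * rnorm x.
Proof. by apply: complexI; rewrite rmorphM /= -!rnormE normrZ. Qed.

Lemma rnormM (a b : R[i]) : rnorm (a * b) = rnorm a * rnorm b.
Proof. by apply: complexI; rewrite rmorphM /= -!rnormE normrM. Qed.

Lemma rnormV (a : R[i]) : rnorm a^-1 = (rnorm a)^-1.
Proof. by apply: complexI; rewrite fmorphV /= -!rnormE normfV. Qed.

Lemma rnormR (r : R) : rnorm r%:C = `|r|.
Proof. by apply: complexI; rewrite -rnormE normc_def /= expr0n /= addr0 sqrtr_sqr. Qed.

Lemma rnorm_i : rnorm ('i : R[i]) = 1.
Proof. by apply: complexI; rewrite -rnormE normc_def /= expr0n expr1n add0r sqrtr1. Qed.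

Lemma rnorm_Re (z : R[i]) : `|complex.Re z| <= rnorm z.
Proof. by rewrite -lecR -rnormE normc_ge_Re. Qed.

Lemma rnorm_Im (z : R[i]) : `|complex.Im z| <= rnorm z.
Proof.
have -> : complex.Im z = - complex.Re (z * 'i) by rewrite ReiNIm opprK.
by rewrite normrN (le_trans (rnorm_Re _)) // rnormM rnorm_i mulr1.
Qed.

End RealNorm.

Lemma exists_mul_le (R : realFieldType) (K e : R) : 0 < e -> exists2 d, 0 < d & K * d <= e.
Proof.
move=> e_gt0; have K1_gt0 : 0 < `|K| + 1 by rewrite ltr_wpDl.
exists (e / (`|K| + 1)); first by rewrite divr_gt0.
by rewrite mulrA ler_pdivrMr // mulrC ler_pM2l // (le_trans (ler_norm K)) // lerDl.
Qed.

Lemma eq_rnorm_small (R : realType) (a b : R[i]) (K : R) :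
  (forall d, 0 < d -> rnorm (a - b) <= K * d) -> a = b.
Proof.
move=> ab_small; apply/eqP; rewrite -subr_eq0 -rnorm_eq0 eq_le rnorm_ge0 andbT.
apply/ler_addgt0Pr => e /(exists_mul_le K)[d d_gt0 Kd_le]; rewrite add0r.
exact: le_trans (ab_small d d_gt0) Kd_le.
Qed.

Lemma ler_harmonic (R : archiRealFieldType) (a b K : R) :
  (forall n : nat, a <= b + K / n.+1%:R) -> a <= b.
Proof.
move=> ab; apply/ler_addgt0Pr => e e_gt0.
apply: le_trans (ab (Num.truncn (`|K| / e))) _; rewrite lerD2l ler_pdivrMr ?ltr0Sn //.
apply: le_trans (ler_norm K) _; rewrite mulrC -ler_pdivrMr //.
exact/ltW/truncnS_gt.
Qed.

Lemma cauchy_limit_real (R : realType) (a e : nat -> R) :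
  (forall n m, `|a n - a m| <= e n + e m) -> exists L, forall m, `|L - a m| <= e m.
Proof.
move=> ae.
pose E := [set a n - e n | n in [set: nat]].
have ubE m : ubound E (a m + e m).
  by move=> _ [n _ <-]; move: (ae n m); rewrite ler_norml => /andP[_]; lra.
have supE : has_sup E by split; [exists (a 0%N - e 0%N), 0%N | exists (a 0%N + e 0%N)].
exists (sup E) => m; rewrite ler_norml.
have : a m - e m <= sup E by apply: sup_upper_bound => //; exists m.
have : sup E <= a m + e m by apply: ge_sup; [case: supE | apply: ubE].
lra.
Qed.

Lemma cauchy_limit_complex (R : realType) (u : nat -> R[i]) (e : nat -> R) :
  (forall n m, rnorm (u n - u m) <= e n + e m) -> exists L, forall m, rnorm (L - u m) <= e m *+ 2.
Proof.
move=> ue.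
have [a aL] : exists a, forall m, `|a - complex.Re (u m)| <= e m.
  apply: cauchy_limit_real => n m; rewrite -raddfB; exact: le_trans (rnorm_Re _) (ue n m).
have [b bL] : exists b, forall m, `|b - complex.Im (u m)| <= e m.
  apply: cauchy_limit_real => n m; rewrite -raddfB; exact: le_trans (rnorm_Im _) (ue n m).
exists (a +i* b) => m; rewrite mulr2n.
have -> : (a +i* b) - u m = (a - complex.Re (u m))%:C + 'i * (b - complex.Im (u m))%:C.
  by rewrite [u m]complexE; apply/eqP; rewrite eq_complex /=; simpc.
apply: le_trans (ler_rnormD _ _) (lerD _ _); first by rewrite rnormR.
by rewrite rnormM rnorm_i mul1r rnormR.
Qed.

Section BanachAlgebra.
Variables (R : realType) (A : completeNormedModType R[i]) (B : cbanach_alg A).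
Local Notation "x ** y" := (bmul B x y) (at level 40, left associativity).
Implicit Types x y z : A.

Lemma bmulBl x y z : (x - y) ** z = x ** z - y ** z.
Proof. by rewrite bmulDl -scaleN1r bmulZl scaleN1r. Qed.

Lemma bmul0l x : 0 ** x = 0.
Proof. by have := bmulZl B 0 x x; rewrite !scale0r. Qed.

Lemma bmulDr x y z : x ** (y + z) = x ** y + x ** z.
Proof. by rewrite bmulC bmulDl !(bmulC B x). Qed.

Lemma bmulBr x y z : x ** (y - z) = x ** y - x ** z.
Proof. by rewrite !(bmulC B x) bmulBl. Qed.

Lemma bmulZr a x y : x ** (a *: y) = a *: (x ** y).
Proof. by rewrite bmulC bmulZl bmulC. Qed.

Lemma rnorm_bmul x y : rnorm (x ** y) <= rnorm x * rnorm y.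
Proof. by rewrite -lecR rmorphM /= -!rnormE bnorm_mul. Qed.

Section Character.
Variable m : A -> R[i].
Hypothesis m_char : is_char B m.

Lemma charD x y : m (x + y) = m x + m y. Proof. by case: m_char. Qed.
Lemma charZ a x : m (a *: x) = a * m x. Proof. by case: m_char. Qed.
Lemma charM x y : m (x ** y) = m x * m y. Proof. by case: m_char. Qed.
Lemma char1 : m (bone B) = 1. Proof. by case: m_char. Qed.

Lemma charB x y : m (x - y) = m x - m y.
Proof. by rewrite charD -scaleN1r charZ mulN1r. Qed.

Lemma char0 : m 0 = 0.
Proof. by rewrite -(subrr 0) charB subrr. Qed.

End Character.

Section Neumann.
Variable g : A.
Hypothesis g_lt1 : rnorm g < 1.

Let q := rnorm g.
Let q_ge0 : 0 <= q. Proof. exact: rnorm_ge0. Qed.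
Let pw n := iter n (bmul B g) (bone B).
Let geom n := \sum_(0 <= k < n) pw k.
Let K := rnorm (bone B) / (1 - q).
Let K_ge0 : 0 <= K. Proof. by rewrite divr_ge0 ?rnorm_ge0 // subr_ge0 ltW. Qed.

Let rnorm_pw n : rnorm (pw n) <= q ^+ n * rnorm (bone B).
Proof.
elim: n => [|n IHn]; first by rewrite expr0 mul1r.
apply: le_trans (rnorm_bmul _ _) _.
by rewrite exprS -mulrA ler_wpM2l.
Qed.

Let one_sub_mul_geom n : (bone B - g) ** geom n = bone B - pw n.
Proof.
elim: n => [|n IHn]; first by rewrite /geom big_geq // bmulC bmul0l subrr.
rewrite /geom big_nat_recr //= bmulDr IHn bmulBl bmul1.
by rewrite addrA subrK.
Qed.

Let rnorm_geom_tail n d : rnorm (geom (n + d) - geom n) <= (q ^+ n - q ^+ (n + d)) * K.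
Proof.
elim: d => [|d IHd]; first by rewrite addn0 !subrr rnorm0 mul0r.
rewrite addnS /geom big_nat_recr //= addrAC.
apply: le_trans (ler_rnormD _ _) _.
have -> : (q ^+ n - q ^+ (n + d).+1) * K =
    (q ^+ n - q ^+ (n + d)) * K + q ^+ (n + d) * rnorm (bone B).
  by rewrite /K exprS; field; rewrite subr_eq0 eq_sym lt_eqF.
exact: lerD.
Qed.

Let expq_small e : 0 < e -> \forall n \near \oo, q ^+ n < e.
Proof.
move=> e_gt0; have q_lt1 : `|q| < 1 by rewrite ger0_norm.
have /cvgr_dist_lt/(_ e e_gt0) := cvg_expr q_lt1.
by apply: filterS => n; rewrite sub0r normrN ger0_norm // exprn_ge0.
Qed.

Let geom_cvg : cvg (geom @ \oo).
Proof.
apply/cauchy_cvgP/cauchy_exP => _ /gt0_complexE[e e_gt0 ->].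
have [N qN] := filter_ex (expq_small (divr_gt0 e_gt0 (ltr_wpDl K_ge0 ltr01))).
exists (geom N), N => // n /= Nn.
rewrite -ball_normE /= distrC rnormE ltcR.
have := rnorm_geom_tail N (n - N); rewrite subnKC // => /le_lt_trans; apply.
move: qN; rewrite ltr_pdivlMr ?(ltr_wpDl K_ge0 ltr01) //.
have := mulr_ge0 (exprn_ge0 n q_ge0) K_ge0; have := exprn_ge0 N q_ge0; nra.
Qed.

Lemma one_sub_has_inverse : exists L, (bone B - g) ** L = bone B.
Proof.
pose L := lim (geom @ \oo); exists L.
have L_near e : 0 < e -> \forall n \near \oo, rnorm (L - geom n) < e.
  move=> e_gt0; have /cvgr_dist_lt := geom_cvg; move=> /(_ e%:C); rewrite ltcR => /(_ e_gt0).
  by apply: filterS => n; rewrite rnormE ltcR.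
set a := rnorm (bone B - g); set b := rnorm (bone B).
have a_ge0 : 0 <= a := rnorm_ge0 _; have b_ge0 : 0 <= b := rnorm_ge0 _.
apply/eqP; rewrite -subr_eq0 -rnorm_eq0 eq_le rnorm_ge0 andbT.
apply/ler_addgt0Pr => e e_gt0; rewrite add0r.
have d_gt0 : 0 < e / (a + b + 1) by rewrite divr_gt0 // ltr_wpDl ?addr_ge0.
have [n [Ln qn]] := filter_ex (filterI (L_near _ d_gt0) (expq_small d_gt0)).
have -> : (bone B - g) ** L - bone B = (bone B - g) ** (L - geom n) - pw n.
  by rewrite bmulBr one_sub_mul_geom opprB addrA addrAC addrK.
apply: le_trans (ler_rnormD _ _) _; rewrite rnormN.
have := rnorm_bmul (bone B - g) (L - geom n); have := rnorm_pw n.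
have := rnorm_ge0 (L - geom n); have := exprn_ge0 n q_ge0.
move: Ln qn; rewrite !ltr_pdivlMr ?ltr_wpDl ?addr_ge0 //; nra.
Qed.

End Neumann.

Lemma char_le_rnorm m f : is_char B m -> rnorm (m f) <= rnorm f.
Proof.
move=> m_char; rewrite leNgt; apply/negP => f_lt.
have mf_gt0 : 0 < rnorm (m f) := le_lt_trans (rnorm_ge0 f) f_lt.
have mf_neq0 : m f != 0 by rewrite -rnorm_eq0 gt_eqF.
have g_lt1 : rnorm ((m f)^-1 *: f) < 1 by rewrite rnormZ rnormV mulrC ltr_pdivrMr ?mul1r.
have [L /(congr1 m)] := one_sub_has_inverse g_lt1.
rewrite charM // charB // char1 // charZ // mulVf // subrr mul0r => /eqP.
by rewrite eq_sym oner_eq0.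
Qed.

End BanachAlgebra.

Section Automorphism.
Variables (R : realType) (A : completeNormedModType R[i]) (B : cbanach_alg A).

Lemma char_comp U m : is_automorphism B U -> is_char B m -> is_char B (m \o U).
Proof.
case=> _ UD UZ UM U1 [mD mZ mM m1]; split => /=.
- by move=> x y; rewrite UD mD.
- by move=> a x; rewrite UZ mZ.
- by move=> x y; rewrite UM mM.
- by rewrite U1 m1.
Qed.

Lemma automorphism_inv U V :
  is_automorphism B U -> cancel U V -> cancel V U -> is_automorphism B V.
Proof.
move=> [_ UD UZ UM U1] UK VK; split.
- by exists U.
- by move=> x y; apply: (can_inj UK); rewrite UD !VK.
- by move=> a x; apply: (can_inj UK); rewrite UZ !VK.
- by move=> x y; apply: (can_inj UK); rewrite UM !VK.
- by apply: (can_inj UK); rewrite U1 VK.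
Qed.

Variable U : A -> A.
Hypothesis U_aut : is_automorphism B U.

Let pullback (F : set (A -> R[i])) := [set m | is_char B m /\ F (m \o U)].

Lemma gelfand_closed_pullback F : gelfand_closed B F -> gelfand_closed B (pullback F).
Proof.
move=> [_ F_closed]; split=> [m [] //|m m_char mUF].
have /F_closed[|fs [e [e_gt0 near_notF]]] := char_comp U_aut m_char.
  by move=> ?; apply: mUF.
exists (map U fs), e; split=> // m' m'_char fs_near [_].
apply: near_notF (char_comp U_aut m'_char) _ => f f_fs /=.
exact/fs_near/map_f.
Qed.

Lemma boundary_pullback F : is_boundary B F -> is_boundary B (pullback F).
Proof.
case: U_aut => -[V UK VK] _ _ _ _ [F_char F_bd]; split=> [m [] //|f].
have [m Fm m_max] := F_bd (V f).
exists (m \o V).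
  split; first exact/(char_comp (automorphism_inv U_aut UK VK))/F_char.
  by rewrite (_ : (m \o V) \o U = m) //; apply: funext => x /=; rewrite UK.
by move=> m' m'_char /=; have := m_max _ (char_comp U_aut m'_char); rewrite /= VK.
Qed.

Lemma shilov_comp t : shilov B t -> shilov B (t \o U).
Proof.
move=> [t_char t_min]; split; first exact: char_comp U_aut t_char.
move=> F F_closed F_bd.
by have [] := t_min _ (gelfand_closed_pullback F_closed) (boundary_pullback F_bd).
Qed.

End Automorphism.

Section CheckAlgebra.
Variables (R : realType) (A : completeNormedModType R[i]) (B : cbanach_alg A).
Implicit Types (g h : (A -> R[i]) -> R[i]) (x : A).

Definition bounded_on_dA g (M : R) := forall t, shilov B t -> rnorm (g t) <= M.

Definition sup_dA x := sup [set rnorm (t x) | t in shilov B].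

Lemma shilov_char t : shilov B t -> is_char B t.
Proof. by case. Qed.

Lemma checkAP g :
  checkA B g <-> forall e, 0 < e -> exists x, bounded_on_dA (fun t => g t - t x) e.
Proof.
split=> g_check e /g_check[x x_near]; exists x => t /x_near; by rewrite lec_rnorm.
Qed.

Lemma checkA_approx g (K : R) :
  (forall d, 0 < d -> exists x, bounded_on_dA (fun t => g t - t x) (K * d)) -> checkA B g.
Proof.
move=> g_approx; apply/checkAP => e /(exists_mul_le K)[d /g_approx[x x_near] Kd_le].
by exists x => t /x_near/le_trans; apply.
Qed.

Lemma bounded_on_dA_lin a g h x y d :
  bounded_on_dA (fun t => g t - t x) d -> bounded_on_dA (fun t => h t - t y) d ->
  bounded_on_dA (fun t => a * g t + h t - t (a *: x + y)) ((rnorm a + 1) * d).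
Proof.
move=> gx_le hy_le t t_dA; have t_char := shilov_char t_dA.
rewrite (charD t_char) (charZ t_char).
have -> : a * g t + h t - (a * t x + t y) = a * (g t - t x) + (h t - t y) by ring.
apply: le_trans (ler_rnormD _ _) _; rewrite rnormM mulrDl mul1r.
by rewrite lerD ?ler_wpM2l ?rnorm_ge0 ?gx_le ?hy_le.
Qed.

Lemma checkA_lin a g h : checkA B g -> checkA B h -> checkA B (fun t => a * g t + h t).
Proof.
move=> /checkAP g_check /checkAP h_check; apply: (checkA_approx (K := rnorm a + 1)) => d d_gt0.
have [x gx_le] := g_check d d_gt0; have [y hy_le] := h_check d d_gt0.
by exists (a *: x + y); apply: bounded_on_dA_lin.
Qed.

Lemma checkA_check x : checkA B (fun t => t x).
Proof. by apply/checkAP => e e_gt0; exists x => t _; rewrite subrr rnorm0 ltW. Qed.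

Lemma has_sup_dA x t : shilov B t -> has_sup [set rnorm (s x) | s in shilov B].
Proof.
move=> t_dA; split; first by exists (rnorm (t x)), t.
exists (rnorm x) => _ [s /shilov_char s_char <-].
exact: char_le_rnorm x s_char.
Qed.

Lemma le_sup_dA x t : shilov B t -> rnorm (t x) <= sup_dA x.
Proof. by move=> t_dA; apply: sup_upper_bound; [exact: has_sup_dA t_dA | exists t]. Qed.

Lemma supnorm_eq1_normalized x t : shilov B t -> 0 < rnorm (t x) ->
  supnorm_eq1 B (fun s => s ((sup_dA x)^-1%:C *: x)).
Proof.
move=> t_dA tx_gt0; have sup_gt0 : 0 < sup_dA x := lt_le_trans tx_gt0 (le_sup_dA x t_dA).
have normalizedE s : shilov B s -> `|s ((sup_dA x)^-1%:C *: x)| = (rnorm (s x) / sup_dA x)%:C.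
  move=> s_dA; rewrite (charZ (shilov_char s_dA)) rnormE rnormM rnormR.
  by rewrite ger0_norm ?invr_ge0 ?ltW // mulrC.
split=> [s s_dA | e e_gt0].
  by rewrite normalizedE // lecR ler_pdivrMr // mul1r le_sup_dA.
have [_ [s s_dA <-] sup_lt] := sup_adherent (mulr_gt0 e_gt0 sup_gt0) (has_sup_dA x t_dA).
exists s => //; rewrite normalizedE // (_ : 1 - e%:C = (1 - e)%:C); last first.
  by rewrite rmorphB rmorph1.
rewrite ltcR ltr_pdivlMr //; move: sup_lt; rewrite -/(sup_dA x); nra.
Qed.

End CheckAlgebra.

Section Resolvent.
Variables (R : realType) (A : completeNormedModType R[i]) (B : cbanach_alg A).
Variables (U : A -> A) (w : A) (l : R[i]).
Hypothesis U_aut : is_automorphism B U.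

Let lT x := l *: x - wcomp B w U x.

Let lTZ a x : lT (a *: x) = a *: lT x.
Proof.
case: U_aut => _ _ UZ _ _.
by rewrite /lT /wcomp UZ bmulZr scalerBr !scalerA mulrC.
Qed.

Let lTD x y : lT (x + y) = lT x + lT y.
Proof.
case: U_aut => _ UD _ _ _.
by rewrite /lT /wcomp UD bmulDr scalerDr opprD addrACA.
Qed.

Let lTB x y : lT (x - y) = lT x - lT y.
Proof. by rewrite lTD -scaleN1r lTZ scaleN1r. Qed.

Lemma sub_checkT_check t x : is_char B t -> l * t x - checkT w U (fun s => s x) t = t (lT x).
Proof.
by move=> t_char; rewrite /checkT /lT /wcomp /= (charB t_char) (charZ t_char) (charM t_char).
Qed.

Lemma bounded_below : ~ ap_spectrum_check B (checkT w U) l ->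
  exists c, forall x M,
    bounded_on_dA B (fun t => t (lT x)) M -> bounded_on_dA B (fun t => t x) (c * M).
Proof.
move=> l_nap; apply: contrapT => unbounded; apply: l_nap.
have /choice[xM xM_bad] n : exists xM : A * R,
    bounded_on_dA B (fun t => t (lT xM.1)) xM.2 /\
    exists2 t, shilov B t & n.+1%:R * xM.2 < rnorm (t xM.1).
  apply: contrapT => bounded_n; apply: unbounded; exists n.+1%:R => x M lTx_le t t_dA.
  by rewrite leNgt; apply/negP => lt_tx; apply: bounded_n; exists (x, M); split; last exists t.
pose x n := (xM n).1; pose M n := (xM n).2; pose s n := sup_dA B (x n).
have lTx_le n : bounded_on_dA B (fun t => t (lT (x n))) (M n) by case: (xM_bad n).
have tx_gt n : exists2 t, shilov B t & n.+1%:R * M n < rnorm (t (x n)) by case: (xM_bad n).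
have M_ge0 n : 0 <= M n.
  by have [t t_dA _] := tx_gt n; apply: le_trans (rnorm_ge0 _) (lTx_le n t t_dA).
have Ms_lt n : n.+1%:R * M n < s n.
  by have [t t_dA lt_tx] := tx_gt n; apply: lt_le_trans lt_tx (le_sup_dA _ t_dA).
have s_gt0 n : 0 < s n by apply: le_lt_trans (Ms_lt n); rewrite mulr_ge0.
exists (fun n t => t ((s n)^-1%:C *: x n)); split.
  move=> n; split; first exact: checkA_check.
  have [t t_dA lt_tx] := tx_gt n.
  by apply: supnorm_eq1_normalized t_dA _; apply: le_lt_trans lt_tx; rewrite mulr_ge0.
move=> e e_gt0; exists (Num.truncn e^-1) => n le_n t t_dA.
have t_char := shilov_char t_dA.
rewrite sub_checkT_check // lTZ (charZ t_char) lec_rnorm rnormM rnormR.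
rewrite ger0_norm ?invr_ge0 ?(ltW (s_gt0 n)) // mulrC -/(s n) ler_pdivrMr //.
have ek_gt1 : 1 < e * n.+1%:R.
  have k_gt : e^-1 < n.+1%:R.
    by apply: lt_le_trans (truncnS_gt _) _; rewrite ler_nat ltnS.
  by rewrite -(ltr_pM2l e_gt0) mulfV ?gt_eqF in k_gt.
have M_le : M n <= e * (n.+1%:R * M n) by rewrite mulrA; exact: ler_peMl (M_ge0 n) (ltW ek_gt1).
apply: le_trans (lTx_le n t t_dA) (le_trans M_le _).
by rewrite ler_pM2l // ltW.
Qed.

Lemma sub_checkT_approx g x d : bounded_on_dA B (fun t => g t - t x) d ->
  bounded_on_dA B (fun t => l * g t - checkT w U g t - t (lT x)) ((rnorm l + rnorm w) * d).
Proof.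
move=> gx_le t t_dA; have t_char := shilov_char t_dA.
rewrite -(sub_checkT_check x t_char) /checkT /=.
have -> : l * g t - t w * g (t \o U) - (l * t x - t w * t (U x)) =
    l * (g t - t x) - t w * (g (t \o U) - (t \o U) x) by rewrite /=; ring.
apply: le_trans (ler_rnormD _ _) _; rewrite rnormN !rnormM mulrDl.
apply: lerD; first by rewrite ler_wpM2l ?rnorm_ge0 ?gx_le.
apply: ler_pM; rewrite ?rnorm_ge0 ?(char_le_rnorm w t_char) //.
exact/gx_le/(shilov_comp U_aut).
Qed.

Lemma checkA_sub_checkT g : checkA B g -> checkA B (fun t => l * g t - checkT w U g t).
Proof.
move=> /checkAP g_check; apply: (checkA_approx (K := rnorm l + rnorm w)) => d d_gt0.
have [x gx_le] := g_check d d_gt0.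
by exists (lT x); apply: sub_checkT_approx.
Qed.

Section Extension.
Variable S0 : A -> A.
Hypothesis S0_right : forall x, lT (S0 x) = x.
Variable c : R.
Hypothesis c_below : forall x M,
  bounded_on_dA B (fun t => t (lT x)) M -> bounded_on_dA B (fun t => t x) (c * M).

(* [v] is admissible as the value at [t] of (λ - Ť)⁻¹ g: this inverse maps (lT x)ˇ to x̌
   and is c-Lipschitz. *)
Let extends (g : (A -> R[i]) -> R[i]) (v : R[i]) (t : A -> R[i]) := forall x e,
  bounded_on_dA B (fun s => g s - s (lT x)) e -> rnorm (v - t x) <= c * e.

Let approx_lT g d : checkA B g -> 0 < d ->
  exists x, bounded_on_dA B (fun s => g s - s (lT x)) d.
Proof. by move=> /checkAP g_check /g_check[y gy_le]; exists (S0 y); rewrite S0_right. Qed.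

Let exists_extension g t : checkA B g -> shilov B t -> exists v, extends g v t.
Proof.
move=> g_check t_dA; have t_char := shilov_char t_dA.
have /choice[y gy_le] n : exists y, bounded_on_dA B (fun s => g s - s (lT y)) n.+1%:R^-1.
  by apply: approx_lT; rewrite ?invr_gt0.
have y_near n x e : bounded_on_dA B (fun s => g s - s (lT x)) e ->
    rnorm (t (y n) - t x) <= c * (n.+1%:R^-1 + e).
  move=> gx_le; rewrite -(charB t_char); apply: c_below => // s s_dA.
  rewrite lTB (charB (shilov_char s_dA)) -(subrKA (g s)).
  by apply: le_trans (ler_rnormD _ _) (lerD _ (gx_le s s_dA)); rewrite rdistC gy_le.
have [v v_lim] : exists v, forall n, rnorm (v - t (y n)) <= (c / n.+1%:R) *+ 2.
  by apply: cauchy_limit_complex => n m; rewrite -mulrDr; apply/y_near/gy_le.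
exists v => x e gx_le; apply: (@ler_harmonic _ _ _ (c *+ 3)) => n.
rewrite -(subrKA (t (y n))); apply: le_trans (ler_rnormD _ _) _.
apply: le_trans (lerD (v_lim n) (y_near n x e gx_le)) _.
suff -> : c / n.+1%:R *+ 2 + c * (n.+1%:R^-1 + e) = c * e + c *+ 3 / n.+1%:R by [].
ring.
Qed.

Let Sc g t := xget 0 [set v | extends g v t].

Let Sc_extends g t : checkA B g -> shilov B t -> extends g (Sc g t) t.
Proof. by move=> g_check t_dA; exact: (xgetPex 0 (exists_extension g_check t_dA)). Qed.

Let eq_Sc g t v (K1 K2 : R) : checkA B g -> shilov B t ->
  (forall d, 0 < d -> exists x,
     bounded_on_dA B (fun s => g s - s (lT x)) (K1 * d) /\ rnorm (v - t x) <= K2 * d) ->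
  v = Sc g t.
Proof.
move=> g_check t_dA v_approx; apply: (@eq_rnorm_small _ _ _ (K2 + c * K1)).
move=> d /v_approx[x [gx_le vx_le]].
rewrite -(subrKA (t x)) mulrDl -mulrA; apply: le_trans (ler_rnormD _ _) (lerD vx_le _).
by rewrite rdistC; apply: Sc_extends.
Qed.

Let Sc_checkA g : checkA B g -> checkA B (Sc g).
Proof.
move=> g_check; apply: (checkA_approx (K := c)) => d /(approx_lT g_check)[x gx_le].
by exists x => t t_dA; apply: Sc_extends.
Qed.

Let Sc_lin a g h : checkA B g -> checkA B h ->
  eqdA B (Sc (fun t => a * g t + h t)) (fun t => a * Sc g t + Sc h t).
Proof.
move=> g_check h_check t t_dA; symmetry.
apply: (eq_Sc (K1 := rnorm a + 1) (K2 := c * (rnorm a + 1))) => // [|d d_gt0].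
  exact: checkA_lin.
have [x gx_le] := approx_lT g_check d_gt0; have [y hy_le] := approx_lT h_check d_gt0.
exists (a *: x + y); split; first by rewrite lTD lTZ; exact: bounded_on_dA_lin.
have t_char := shilov_char t_dA.
rewrite (charD t_char) (charZ t_char).
have -> : a * Sc g t + Sc h t - (a * t x + t y) = a * (Sc g t - t x) + (Sc h t - t y) by ring.
apply: le_trans (ler_rnormD _ _) _; rewrite rnormM.
have -> : c * (rnorm a + 1) * d = rnorm a * (c * d) + c * d by ring.
by rewrite lerD ?ler_wpM2l ?rnorm_ge0 //; apply: Sc_extends.
Qed.

Let Sc_bounded g (M : R) : checkA B g -> bounded_on_dA B g M -> bounded_on_dA B (Sc g) (c * M).
Proof.
move=> g_check g_le t t_dA.
have lT0 : lT 0 = 0 by have := lTB 0 0; rewrite !subrr.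
have := @Sc_extends g t g_check t_dA 0 M; rewrite (char0 (shilov_char t_dA)) subr0; apply.
by move=> s s_dA; rewrite lT0 (char0 (shilov_char s_dA)) subr0; apply: g_le.
Qed.

Let Sc_sub_checkT g : checkA B g -> eqdA B (Sc (fun t => l * g t - checkT w U g t)) g.
Proof.
move=> g_check t t_dA; symmetry.
apply: (eq_Sc (K1 := rnorm l + rnorm w) (K2 := 1)) => // [|d d_gt0].
  exact: checkA_sub_checkT.
have /checkAP/(_ d d_gt0)[x gx_le] := g_check.
by exists x; split; [apply: sub_checkT_approx | rewrite mul1r gx_le].
Qed.

Let sub_checkT_Sc g : checkA B g -> eqdA B (fun t => l * Sc g t - checkT w U (Sc g) t) g.
Proof.
move=> g_check t t_dA; have t_char := shilov_char t_dA.
apply: (@eq_rnorm_small _ _ _ (rnorm l * c + rnorm w * c + 1)).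
move=> d /(approx_lT g_check)[x gx_le].
have Sgt_le := Sc_extends g_check t_dA gx_le.
have SgtU_le := Sc_extends g_check (shilov_comp U_aut t_dA) gx_le.
have -> : l * Sc g t - checkT w U (Sc g) t - g t = l * (Sc g t - t x)
    - t w * (Sc g (t \o U) - (t \o U) x) - (g t - t (lT x)).
  by rewrite -(sub_checkT_check x t_char) /checkT /=; ring.
apply: le_trans (ler_rnormD _ _) _; rewrite rnormN.
apply: le_trans (lerD (ler_rnormD _ _) (lexx _)) _; rewrite rnormN !rnormM.
have -> : (rnorm l * c + rnorm w * c + 1) * d = rnorm l * (c * d) + rnorm w * (c * d) + d by ring.
rewrite !lerD ?ler_wpM2l ?rnorm_ge0 ?gx_le //.
by apply: ler_pM; rewrite ?rnorm_ge0 ?(char_le_rnorm w t_char).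
Qed.

Lemma not_spectrum_check : ~ spectrum_check B (checkT w U) l.
Proof.
apply; exists Sc; split.
- exact: Sc_checkA.
- by move=> a g h; apply: Sc_lin.
- exists c%:C => g M g_check g_le t t_dA.
  have M_ge0 : 0 <= M := le_trans (normr_ge0 _) (g_le t t_dA).
  rewrite (ge0_complexE M_ge0) -rmorphM lec_rnorm; apply: Sc_bounded t t_dA => // s s_dA.
  by rewrite -lec_rnorm -(ge0_complexE M_ge0); apply: g_le.
- exact: Sc_sub_checkT.
- exact: sub_checkT_Sc.
Qed.

End Extension.

End Resolvent.

Theorem proposition2 (R : realType) (A : completeNormedModType R[i])
  (B : cbanach_alg A) (U : A -> A) (w : A) :
  semisimple B -> is_automorphism B U ->
  spectrum_check B (checkT w U) `\` ap_spectrum_check B (checkT w U)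
    `<=` spectrum (wcomp B w U).
Proof.
move=> _ U_aut l [l_sp l_nap] [S [_ _ _ _ S_right]].
have [c c_below] := bounded_below U_aut l_nap.
exact: (not_spectrum_check U_aut S_right c_below l_sp).
Qed.
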